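(* $\displaystyle\mathfrak G^Q_{s_1s_2\cdots s_{n-1}}(z|\eta)=\sum_{j=0}^{n-1}(-1)^j(1-\eta_1)^jF^{(n-1)}_j.$
   Context: Fix $n\ge2$. With the convention $Q_n:=0$, for $0\le m\le i\le n$ put $F^{(i)}_m=\sum_{J\subset\{1,\dots,i\},|J|=m}\prod_{j\in J,\,j+1\notin J}(1-Q_j)\prod_{j\in J}z_j$. Let $s_i^{(\eta)}$ swap $\eta_i,\eta_{i+1}$, $x\ominus y=(x-y)/(1-y)$, and $D^Q_i=1+\frac{s_i^{(\eta)}-1}{\eta_{i+1}\ominus\eta_i}$ ($1\le i\le n-1$) acting on $\mathbb{Z}[Q_1,\dots,Q_{n-1}][z_1,\dots,z_n,\eta_1,\dots,\eta_n]$ (fixing $z,Q$). Let $\psi_i=\sum_{j=0}^i(-1)^j(1-\eta_{n-i})^jF^{(i)}_j$. The quantum double Grothendieck polynomials $\mathfrak G^Q_w(z|\eta)$, $w\in S_n$, are the unique family with $\mathfrak G^Q_{w_\circ}=\prod_{i=1}^{n-1}\psi_i$ and $D^Q_i\mathfrak G^Q_w=\mathfrak G^Q_{s_iw}$ if $s_iw<w$, $=\mathfrak G^Q_w$ if $s_iw>w$. *)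

From HB Require Import structures.
From mathcomp Require Import all_boot all_order all_algebra all_fingroup.
From mathcomp Require Import fraction.
From mathcomp Require Export mpoly.
Unset Printing Implicit Defensive.
Import Order.TTheory GRing.Theory Num.Theory.
Local Open Scope ring_scope.

(* Coefficient ring Z[Q_1,...,Q_{n-1}] : variable 'X_k (k : 'I_(n.-1)) is Q_{k+1}. *)
Definition Cring (n : nat) := {mpoly int[n.-1]}.

(* Main ring Z[Q][z_1..z_n, eta_1..eta_n]: over 'I_(n+n), index k-1 is z_k and
   index n+k-1 is eta_k. *)
Definition Pring (n : nat) := {mpoly (Cring n)[n + n]}.

(* Its fraction field (used only to state the operator D^Q_i, which involves a division). *)
Definition Kfield (n : nat) := {fraction (Pring n)}.

(* Q_j (1-based).  insub fails for j = n, which gives the convention Q_n = 0. *)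
Definition Qv (n j : nat) : Cring n :=
  if (1 <= j < n)%N then oapp (fun k : 'I_(n.-1) => 'X_k) 0 (insub j.-1) else 0.

Definition Xv (n k : nat) : Pring n :=
  oapp (fun i : 'I_(n + n) => 'X_i) 0 (insub k).

Definition zv (n j : nat) : Pring n := Xv n j.-1.
Definition etav (n j : nat) : Pring n := Xv n (n + j.-1).

Definition QP (n j : nat) : Pring n := (Qv n j)%:MP.

(* F^{(i)}_m = sum over J subset {1..i}, |J| = m, of
   prod_{j in J, j+1 notin J} (1 - Q_j) * prod_{j in J} z_j.
   J is encoded as a set of 'I_i, where a : 'I_i stands for j = a+1. *)
Definition Fpol (n i m : nat) : Pring n :=
  \sum_(J : {set 'I_i} | #|J| == m)
     ((\prod_(a in J | ~~ [exists b in J, val b == (val a).+1]) (1 - QP n (val a).+1))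
      * \prod_(a in J) zv n (val a).+1).

Definition psi (n i : nat) : Pring n :=
  \sum_(0 <= j < i.+1) (-1) ^+ j * (1 - etav n (n - i)) ^+ j * Fpol n i j.

Definition Gtop (n : nat) : Pring n := \prod_(1 <= i < n) psi n i.

(* s_i^{(eta)} : swap eta_i and eta_{i+1} (1 <= i <= n-1); fixes z and Q. *)
Definition eta_swap_perm (n i : nat) : 'S_(n + n) :=
  match insub (n + i.-1) , insub (n + i) with
  | Some a, Some b => tperm a b
  | _, _ => 1%g
  end.
Definition s_eta (n i : nat) (f : Pring n) : Pring n := msym (eta_swap_perm n i) f.

Definition toK (n : nat) (f : Pring n) : Kfield n := @FracField.tofrac (Pring n) f.
Arguments toK {n} f.

Definition ominus (n : nat) (x y : Kfield n) : Kfield n := (x - y) / (1 - y).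
Arguments ominus {n} x y.

Definition DQ (n i : nat) (f : Pring n) : Kfield n :=
  toK f + (toK (s_eta n i f) - toK f) / ominus (toK (etav n i.+1)) (toK (etav n i)).

(* Permutations of {1..n} are 'S_n acting on 'I_n (0-based: a : 'I_n stands for a+1). *)
Definition sref (n i : nat) : 'S_n :=
  match insub i.-1, insub i with
  | Some a, Some b => tperm a b
  | _, _ => 1%g
  end.

(* composition of permutations as functions: (u \o v)(x) = u (v x).
   In MathComp, (v * u)%g x = u (v x). *)
Definition pcomp (n : nat) (u v : 'S_n) : 'S_n := (v * u)%g.

Definition plength (n : nat) (w : 'S_n) : nat :=
  #|[set p : 'I_n * 'I_n | (p.1 < p.2)%N && (w p.2 < w p.1)%N]|.

Definition wlong (n : nat) : 'S_n := perm (@rev_ord_inj n).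

Definition cox (n : nat) : 'S_n :=
  foldr (fun i acc => pcomp n (sref n i) acc) 1%g (iota 1 n.-1).

Definition is_QDGroth (n : nat) (G : 'S_n -> Pring n) : Prop :=
  G (wlong n) = Gtop n /\
  forall i : nat, (1 <= i <= n.-1)%N -> forall w : 'S_n,
    ((plength n (pcomp n (sref n i) w) < plength n w)%N ->
        DQ n i (G w) = toK (G (pcomp n (sref n i) w))) /\
    ((plength n w < plength n (pcomp n (sref n i) w))%N ->
        DQ n i (G w) = toK (G w)).

(* G^Q_{w_o} = psi_1 ... psi_(n-1), and s_1 ... s_(n-1) is reached from w_o by n-2 blocks of
   length-decreasing left multiplications: the k-th block s_(n-k), ..., s_(n-1) applies
   D_(n-1) ... D_(n-k).  Each D_q is additive and commutes with multiplication by polynomials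
   symmetric in eta_q, eta_(q+1); for q >= n-k these include every F_j and every psi_i with
   i > k.  Moreover D_p (1 - eta_p)^a = - \sum_(1 <= i < a) (1 - eta_(p+1))^i (1 - eta_p)^(a-i),
   so D_(p+k-1) ... D_p kills (1 - eta_p)^a for 1 <= a <= k.  Since
   psi_k = 1 + \sum_(j >= 1) (-1)^j (1 - eta_(n-k))^j F^(k)_j, the k-th block strips exactly the
   factor psi_k, and at s_1 ... s_(n-1) only psi_(n-1), the claimed sum, is left. *)

From Pilot Require Import Defs.
From HB Require Import structures.
From mathcomp Require Import all_boot all_order all_algebra all_fingroup.
From mathcomp Require Import fraction mpoly.
From mathcomp Require Import zify ring.
Import GRing.Theory.
Local Open Scope ring_scope.

Set Implicit Arguments.
Unset Strict Implicit.

Lemma srefE n i : (1 <= i < n)%N ->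
  exists a b : 'I_n, [/\ a = i.-1 :> nat, b = i :> nat & sref n i = tperm a b].
Proof.
move=> /andP[i_gt0 i_lt_n]; have i1_lt_n : (i.-1 < n)%N by lia.
rewrite /sref (insubT (fun k => k < n)%N i1_lt_n) (insubT (fun k => k < n)%N i_lt_n).
by exists (Sub i.-1 i1_lt_n), (Sub i i_lt_n).
Qed.

Lemma tperm_adjacent_lt n (a b c d : 'I_n) : b = a.+1 :> nat ->
  (tperm a b d < tperm a b c)%N -> (d < c)%N \/ (c = a /\ d = b).
Proof.
move=> ab lt_dc.
have valE (x : 'I_n) : nat_of_ord (tperm a b x) =
    if x == a then b else if x == b then a else x.
  case: tpermP => [->|->|/eqP/negPf -> /eqP/negPf ->]; rewrite ?eqxx //.
  by case: eqP => // /(congr1 val) /=; rewrite ab; lia.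
case: (boolP ((c == a) && (d == b))) => [/andP[/eqP-> /eqP->]|cd]; first by right.
left; move: lt_dc cd; rewrite !valE -!val_eqE /= in ab *.
by case: (val c =P val a); case: (val d =P val b);
  case: (val d =P val a); case: (val c =P val b); rewrite /=; lia.
Qed.

Lemma plength_mul_tperm_lt n (w : 'S_n) (a b : 'I_n) : b = a.+1 :> nat ->
  ((w^-1)%g b < (w^-1)%g a)%N -> (plength n (w * tperm a b) < plength n w)%N.
Proof.
move=> ab descent; apply: proper_card; apply/properP; split.
  apply/subsetP=> [[x y]]; rewrite !inE /= !permM => /andP[lt_xy].
  case/(tperm_adjacent_lt ab) => [->|[wy wx]]; first by rewrite lt_xy.
  by move: lt_xy; rewrite -(permK w x) -(permK w y) wy wx; lia.
exists ((w^-1)%g b, (w^-1)%g a); rewrite !inE /= ?permM !permKV descent /=.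
  by lia.
by rewrite tpermL tpermR; lia.
Qed.

(* One-line notation (0-based) of [w^-1] along the path from [wlong n] to [cox n]:
   [at_stage P Q w] holds once the blocks of descents starting at [n-1], ..., [P+1] and the
   descents [s_P, ..., s_(Q-1)] of the block starting at [P] have been performed. *)
Definition stage_inv (n P Q v : nat) : nat :=
  if (v.+1 < P)%N then (n.-1 - v)%N
  else if (v.+1 < Q)%N then (v.+1 - P)%N
  else if v.+1 == Q then (n - P)%N
  else (v - P)%N.

Definition at_stage n P Q (w : 'S_n) := forall v : 'I_n, (w^-1)%g v = stage_inv n P Q v :> nat.

Lemma at_stage_wlong n : at_stage n n (wlong n).
Proof.
move=> v; have wlong_rev : wlong n (rev_ord v) = v by rewrite permE rev_ordK.
rewrite -{1}wlong_rev permK.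
by rewrite /stage_inv /=; have := ltn_ord v; do ! case: ifP; lia.
Qed.

Lemma at_stage_restart n P (w : 'S_n) : (2 <= P)%N ->
  at_stage P n w -> at_stage P.-1 P.-1 w.
Proof.
by move=> P_ge2 wP v; rewrite wP /stage_inv; have := ltn_ord v; do ! case: ifP; lia.
Qed.

Lemma at_stage_step n P Q (w : 'S_n) : (1 <= P <= Q)%N -> (Q < n)%N -> at_stage P Q w ->
  let w' := Defs.pcomp n (sref n Q) w in
  (plength n w' < plength n w)%N /\ at_stage P Q.+1 w'.
Proof.
move=> /andP[P_gt0 le_PQ] lt_Qn wPQ /=.
have [a [b [/= aE bE ->]]] := @srefE n Q ltac:(lia).
rewrite /Defs.pcomp; split.
  apply: plength_mul_tperm_lt; first by rewrite aE bE; lia.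
  by rewrite !wPQ /stage_inv aE bE; do ! case: ifP; lia.
move=> v; rewrite invMg permM tpermV wPQ /stage_inv.
case: tpermP => [->|->|/eqP va /eqP vb]; rewrite ?aE ?bE; try by do ! case: ifP; lia.
have {}va : nat_of_ord v != Q.-1.
  by apply: contraNneq va => vE; apply/eqP/val_inj; rewrite /= vE aE.
have {}vb : nat_of_ord v != Q.
  by apply: contraNneq vb => vE; apply/eqP/val_inj; rewrite /= vE bE.
by move: va vb; do ! case: ifP; lia.
Qed.

Lemma cox_suffixE n k j (x : 'I_n) : (1 <= j)%N -> (j + k = n)%N ->
  foldr (fun i acc => Defs.pcomp n (sref n i) acc) 1%g (iota j k) x =
  (if (x.+1 < j)%N then x : nat else if (x.+1 < n)%N then x.+1 else j.-1) :> nat.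
Proof.
elim: k j => [|k IH] j j_gt0 jk.
  by rewrite /= perm1; have := ltn_ord x; do ! case: ifP; lia.
rewrite /= /Defs.pcomp permM.
have [a [b [/= aE bE ->]]] := @srefE n j ltac:(lia).
have := IH j.+1 isT ltac:(lia).
set s := foldr _ _ (iota j.+1 k); set y := s x => yE.
case: tpermP => [ya|yb|/eqP ya /eqP yb]; rewrite ?aE ?bE.
- by move: yE; rewrite ya aE; have := ltn_ord x; do ! case: ifP; lia.
- by move: yE; rewrite yb bE; have := ltn_ord x; do ! case: ifP; lia.
have {}ya : nat_of_ord y != j.-1.
  by apply: contraNneq ya => yE'; apply/eqP/val_inj; rewrite /= yE' aE.
have {}yb : nat_of_ord y != j.
  by apply: contraNneq yb => yE'; apply/eqP/val_inj; rewrite /= yE' bE.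
by move: ya yb; rewrite yE; have := ltn_ord x; do ! case: ifP; lia.
Qed.

Lemma at_stage_cox n (w : 'S_n) : (2 <= n)%N -> at_stage 2 n w -> w = cox n.
Proof.
move=> n_ge2 w2; apply/permP=> x; apply/esym/(canRL (permKV w))/val_inj.
rewrite /= w2 /stage_inv (@cox_suffixE n n.-1 1) //; last by lia.
by have := ltn_ord x; do ! case: ifP; lia.
Qed.

HB.instance Definition _ n q :=
  GRing.RMorphism.copy (s_eta n q) (msym (eta_swap_perm n q)).

Lemma msym_tpermX m (R : nzRingType) (a b c : 'I_m) :
  msym (tperm a b) ('X_c : {mpoly R[m]}) = 'X_(tperm a b c).
Proof.
rewrite msymX tpermV; congr 'X_[_]; apply/mnmP=> i; rewrite !mnmE.
by rewrite (canF_eq (tpermK a b)).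
Qed.

Lemma msym_mpolyC m (R : nzRingType) (s : 'S_m) (c : R) : msym s c%:MP = c%:MP.
Proof. by rewrite -[c%:MP]mulr1 mul_mpolyC msymZ msym1. Qed.

Lemma mpolyX_sub_neq0 m (R : nzRingType) (a b : 'I_m) :
  a != b -> ('X_a - 'X_b : {mpoly R[m]}) != 0.
Proof.
move=> ab; apply/eqP => /(congr1 (mcoeff U_(a))).
by rewrite mcoeffB !mcoeffXU eqxx eq_sym (negbTE ab) mcoeff0 subr0 => /eqP; rewrite oner_eq0.
Qed.

Lemma XvE n k (k_lt : (k < n + n)%N) : Xv n k = 'X_(Sub k k_lt).
Proof. by rewrite /Xv (insubT (fun k => k < n + n)%N k_lt). Qed.

Lemma eta_swapE n q : (1 <= q < n)%N -> exists a b : 'I_(n + n),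
  [/\ a = (n + q.-1)%N :> nat, b = (n + q)%N :> nat & eta_swap_perm n q = tperm a b].
Proof.
move=> /andP[q_gt0 q_lt_n].
have a_lt : (n + q.-1 < n + n)%N by lia.
have b_lt : (n + q < n + n)%N by lia.
rewrite /eta_swap_perm (insubT (fun k => k < n + n)%N a_lt) (insubT (fun k => k < n + n)%N b_lt).
by exists (Sub (n + q.-1)%N a_lt), (Sub (n + q)%N b_lt).
Qed.

Lemma s_eta_Xv n q k : (1 <= q < n)%N -> (k < n + n)%N ->
  k != (n + q.-1)%N -> k != (n + q)%N -> s_eta n q (Xv n k) = Xv n k.
Proof.
move=> q_range k_lt ka kb; have [a [b [aE bE swapE]]] := eta_swapE q_range.
rewrite /s_eta swapE (XvE k_lt) msym_tpermX tpermD //.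
  by apply: contraNneq ka => /(congr1 val)/= <-; rewrite aE.
by apply: contraNneq kb => /(congr1 val)/= <-; rewrite bE.
Qed.

Lemma s_eta_etav n q : (1 <= q < n)%N -> s_eta n q (etav n q) = etav n q.+1.
Proof.
move=> q_range; have [a [b [aE bE swapE]]] := eta_swapE q_range.
have a_lt : (n + q.-1 < n + n)%N by lia.
have b_lt : (n + q < n + n)%N by lia.
rewrite /s_eta swapE /etav /= (XvE a_lt) (XvE b_lt) msym_tpermX.
have -> : Sub (n + q.-1)%N a_lt = a by apply: val_inj; rewrite /= aE.
by rewrite tpermL; congr 'X_(_); apply: val_inj; rewrite /= bE.
Qed.

Lemma s_eta_etav_id n q j : (1 <= q < n)%N -> (1 <= j <= n)%N -> j != q -> j != q.+1 ->
  s_eta n q (etav n j) = etav n j.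
Proof. by move=> q_range j_range jq jq1; apply: s_eta_Xv => //; lia. Qed.

Lemma s_eta_zv n q j : (1 <= q < n)%N -> (1 <= j <= n)%N -> s_eta n q (zv n j) = zv n j.
Proof. by move=> q_range j_range; apply: s_eta_Xv => //; lia. Qed.

Lemma s_eta_QP n q j : s_eta n q (QP n j) = QP n j.
Proof. exact: msym_mpolyC. Qed.


Lemma mpolyX_sub_rreg m (R : idomainType) (a b : 'I_m) :
  a != b -> GRing.rreg ('X_a - 'X_b : {mpoly R[m]}).
Proof. by move=> ab; apply/rregP/mpolyX_sub_neq0. Qed.

Lemma etav_sub_rreg n q : (1 <= q < n)%N -> GRing.rreg (etav n q.+1 - etav n q).
Proof.
move=> q_range; have a_lt : (n + q.-1 < n + n)%N by lia.
have b_lt : (n + q < n + n)%N by lia.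
rewrite /etav /= (XvE a_lt) (XvE b_lt); apply: mpolyX_sub_rreg.
by rewrite -val_eqE /=; lia.
Qed.

Section DividedDifference.
Variables (R : comNzRingType) (s : {rmorphism R -> R}) (e e' : R).

(* [g = f + (s f - f) / (e' (-) e)], i.e. [g = DQ n q f] for [s = s_eta n q],
   [e = eta_q] and [e' = eta_(q+1)], with the denominator cleared. *)
Definition divdiff_rel (f g : R) := (s f - f) * (1 - e) = (g - f) * (e' - e).

Lemma divdiff_rel_uniq f g1 g2 : GRing.rreg (e' - e) ->
  divdiff_rel f g1 -> divdiff_rel f g2 -> g1 = g2.
Proof. by rewrite /divdiff_rel => den_reg -> /den_reg /addIr. Qed.

Lemma divdiff_rel_fix r : s r = r -> divdiff_rel r r.
Proof. by rewrite /divdiff_rel => ->; rewrite !subrr !mul0r. Qed.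

Lemma divdiff_rel_add f1 f2 g1 g2 :
  divdiff_rel f1 g1 -> divdiff_rel f2 g2 -> divdiff_rel (f1 + f2) (g1 + g2).
Proof.
have subDD (a b c d : R) : (a + b) - (c + d) = (a - c) + (b - d).
  by rewrite opprD addrACA.
by rewrite /divdiff_rel rmorphD !subDD !mulrDl => -> ->.
Qed.

Lemma divdiff_rel_opp f g : divdiff_rel f g -> divdiff_rel (- f) (- g).
Proof. by rewrite /divdiff_rel rmorphN -!opprD !mulNr => ->. Qed.

Lemma expr_divided_difference (x y : R) a :
  (y ^+ a.+1 - x ^+ a.+1) * x =
  - (\sum_(i < a) y ^+ i.+1 * x ^+ (a - i) + x ^+ a.+1) * (x - y).
Proof.
have -> : \sum_(i < a) y ^+ i.+1 * x ^+ (a - i) + x ^+ a.+1 =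
          x * \sum_(i < a.+1) x ^+ (a.+1.-1 - i) * y ^+ i.
  rewrite big_ord_recl /= subn0 expr0 mulr1 mulrDr -exprS addrC; congr (_ + _).
  rewrite mulr_sumr; apply: eq_bigr => i _.
  by rewrite /bump /= mulrA -exprS subnSK // mulrC.
by rewrite mulNr -mulrA [_ * (x - y)]mulrC -subrXX; ring.
Qed.

(* The [i = 0] term of the geometric sum cancels against the identity part of [D]. *)
Lemma divdiff_rel_onem_exprX a r : s e = e' -> s r = r ->
  divdiff_rel ((1 - e) ^+ a.+1 * r)
              (- \sum_(i < a) (1 - e') ^+ i.+1 * ((1 - e) ^+ (a - i) * r)).
Proof.
rewrite /divdiff_rel rmorphM rmorphXn rmorphB rmorph1 => -> ->.
under eq_bigr do rewrite mulrA.
have -> : e' - e = (1 - e) - (1 - e') by ring.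
rewrite -mulr_suml -mulrBl mulrAC expr_divided_difference; ring.
Qed.

End DividedDifference.

(* Naming the ring explicitly avoids a very slow unification when elaborating [s_eta n q]
   as a ring morphism. *)
Definition DQ_rel n q : Pring n -> Pring n -> Prop :=
  @divdiff_rel (Pring n) (s_eta n q) (etav n q) (etav n q.+1).

Lemma DQ_relP n q (f g : Pring n) : (1 <= q < n)%N -> DQ n q f = toK g -> DQ_rel q f g.
Proof.
move=> q_range DQfg; have den_neq0 := rreg_neq0 (etav_sub_rreg q_range).
have denK_neq0 : toK (etav n q.+1) - toK (etav n q) != 0 by rewrite /toK -tofracB tofrac_eq0.
have gE : toK g - toK f = (toK (s_eta n q f) - toK f) * (1 - toK (etav n q)) /
                          (toK (etav n q.+1) - toK (etav n q)).
  by rewrite -DQfg /DQ /ominus addrAC subrr add0r invf_div mulrA.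
rewrite /DQ_rel /divdiff_rel; apply/eqP; rewrite -tofrac_eq !tofracM !tofracB tofrac1 -!/(toK _).
by rewrite gE mulfVK.
Qed.

Fixpoint DQ_chain n (k p : nat) (f g : Pring n) : Prop :=
  if k is k'.+1 then exists2 h : Pring n, DQ_rel p f h & DQ_chain k' p.+1 h g else f = g.

Definition eta_invariant n p k (r : Pring n) :=
  forall q, (p <= q < p + k)%N -> s_eta n q r = r.

Lemma DQ_chain_uniq n k p (f g1 g2 : Pring n) : (1 <= p)%N -> (p + k <= n)%N ->
  DQ_chain k p f g1 -> DQ_chain k p f g2 -> g1 = g2.
Proof.
elim: k p f => [|k IH] p f p_gt0 pk_le /=; first by move=> <- <-.
move=> [h fh hg1] [h' fh' h'g2].
have hh' : h = h' by apply: divdiff_rel_uniq fh fh'; apply: etav_sub_rreg; lia.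
by apply: IH hg1 _; rewrite ?hh' //; lia.
Qed.

Lemma DQ_chain_fix n k p (r : Pring n) : eta_invariant p k r -> DQ_chain k p r r.
Proof.
elim: k p => [|k IH] p invr //=; exists r.
  by apply: divdiff_rel_fix; apply: invr; lia.
by apply: IH => q q_range; apply: invr; lia.
Qed.

Lemma DQ_chain_add n k p (f1 f2 g1 g2 : Pring n) :
  DQ_chain k p f1 g1 -> DQ_chain k p f2 g2 -> DQ_chain k p (f1 + f2) (g1 + g2).
Proof.
elim: k p f1 f2 => [|k IH] p f1 f2 /=; first by move=> -> ->.
move=> [h1 fh1 hg1] [h2 fh2 hg2]; exists (h1 + h2); first exact: (divdiff_rel_add fh1 fh2).
exact: IH.
Qed.

Lemma DQ_chain_opp n k p (f g : Pring n) : DQ_chain k p f g -> DQ_chain k p (- f) (- g).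
Proof.
elim: k p f => [|k IH] p f /=; first by move->.
by move=> [h fh hg]; exists (- h); [exact: (divdiff_rel_opp fh) | apply: IH].
Qed.

Lemma DQ_chain_sum n k p I (r : seq I) (P : pred I) (F G : I -> Pring n) :
  (forall i, P i -> DQ_chain k p (F i) (G i)) ->
  DQ_chain k p (\sum_(i <- r | P i) F i) (\sum_(i <- r | P i) G i).
Proof.
move=> FG; apply: (big_ind2 (DQ_chain k p)) => //; last by move=> *; apply: DQ_chain_add.
by apply: DQ_chain_fix => q _; rewrite rmorph0.
Qed.

Lemma s_eta_onem_etav n q j : (1 <= q < n)%N -> (1 <= j <= n)%N -> j != q -> j != q.+1 ->
  s_eta n q (1 - etav n j) = 1 - etav n j.
Proof. by move=> *; rewrite rmorphB rmorph1 /= s_eta_etav_id. Qed.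

Lemma DQ_chain_onem_etav_pow n k p a (r : Pring n) : (1 <= p)%N -> (p + k <= n)%N ->
  (1 <= a <= k)%N -> eta_invariant p k r -> DQ_chain k p ((1 - etav n p) ^+ a * r) 0.
Proof.
elim: k p a r => [|k IH] p [|a] r p_gt0 pk_le a_range inv_r; try lia.
exists (- \sum_(i < a) (1 - etav n p.+1) ^+ i.+1 * ((1 - etav n p) ^+ (a - i) * r)).
  apply: (@divdiff_rel_onem_exprX (Pring n)); first by apply: s_eta_etav; lia.
  by apply: inv_r; lia.
suff : DQ_chain k p.+1 (- \sum_(i < a) (1 - etav n p.+1) ^+ i.+1 * ((1 - etav n p) ^+ (a - i) * r))
                       (- \sum_(i < a) 0) by rewrite big1_eq oppr0.
apply: DQ_chain_opp; apply: DQ_chain_sum => i _; apply: IH; try lia.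
  by have := ltn_ord i; lia.
move=> q q_range; rewrite rmorphM rmorphXn /= inv_r; last by lia.
by rewrite s_eta_onem_etav //; lia.
Qed.

Lemma s_eta_Fpol n q i m : (1 <= q < n)%N -> (i <= n)%N -> s_eta n q (Fpol n i m) = Fpol n i m.
Proof.
move=> q_range le_in; rewrite /Fpol rmorph_sum; apply: eq_bigr => J _.
rewrite rmorphM !rmorph_prod; congr (_ * _); apply: eq_bigr => a _.
  by rewrite rmorphB rmorph1 /= s_eta_QP.
by rewrite /= s_eta_zv //; have := ltn_ord a; lia.
Qed.

Lemma Fpol0 n i : Fpol n i 0 = 1.
Proof.
rewrite /Fpol (bigD1 set0) ?cards0 //= [X in _ + X]big1 ?addr0; last first.
  by move=> J /andP[/eqP J_card J_neq0]; move: J_neq0; rewrite -cards_eq0 J_card.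
by rewrite !big_pred0 ?mulr1 // => a; rewrite in_set0.
Qed.

Lemma s_eta_psi n q i : (1 <= q < n)%N -> (1 <= i < n)%N ->
  (n - i != q)%N -> (n - i != q.+1)%N -> s_eta n q (psi n i) = psi n i.
Proof.
move=> q_range i_range iq iq1; rewrite /psi rmorph_sum; apply: eq_bigr => j _.
by rewrite !rmorphM !rmorphXn rmorphN rmorph1 /= s_eta_Fpol ?s_eta_onem_etav //; lia.
Qed.

Lemma DQ_chain_psi n k (r : Pring n) : (1 <= k < n)%N -> eta_invariant (n - k) k r ->
  DQ_chain k (n - k) (psi n k * r) r.
Proof.
move=> k_range inv_r.
have -> : psi n k * r = r + \sum_(j < k)
    (1 - etav n (n - k)) ^+ j.+1 * ((-1) ^+ j.+1 * Fpol n k j.+1 * r).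
  rewrite /psi big_mkord big_ord_recl /= expr0 !mul1r Fpol0 mulrDl mul1r mulr_suml.
  have swap (u v w x : Pring n) : u * v * w * x = v * (u * w * x).
    by rewrite [u * v]mulrC -!mulrA.
  by congr (_ + _); apply: eq_bigr => j _; rewrite /bump leq0n add1n swap.
rewrite -[X in DQ_chain _ _ _ X]addr0; apply: DQ_chain_add; first exact: DQ_chain_fix.
suff : DQ_chain k (n - k) (\sum_(j < k)
    (1 - etav n (n - k)) ^+ j.+1 * ((-1) ^+ j.+1 * Fpol n k j.+1 * r)) (\sum_(j < k) 0).
  by rewrite big1_eq.
apply: DQ_chain_sum => j _; apply: DQ_chain_onem_etav_pow; try lia.
  by have := ltn_ord j; lia.
move=> q q_range; rewrite !rmorphM rmorphXn rmorphN rmorph1 /= s_eta_Fpol ?inv_r //; lia.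
Qed.

Section QuantumDoubleGrothendieck.
Variables (n : nat) (G : 'S_n -> Pring n).
Hypothesis G_QDG : is_QDGroth n G.

Lemma QDGroth_block P k Q (w : 'S_n) : (2 <= P <= Q)%N -> (Q + k = n)%N -> at_stage P Q w ->
  exists2 w', at_stage P n w' & DQ_chain k Q (G w) (G w').
Proof.
elim: k Q w => [|k IH] Q w PQ Qk wPQ.
  by exists w => // v; rewrite wPQ; congr stage_inv; lia.
have /= [descent wPQ1] := @at_stage_step n P Q w ltac:(lia) ltac:(lia) wPQ.
have DQGw := (G_QDG.2 Q ltac:(lia) w).1 descent.
have [w' w'Pn chain] := IH Q.+1 _ ltac:(lia) ltac:(lia) wPQ1.
exists w' => //; exists (G (Defs.pcomp n (sref n Q) w)); last exact: chain.
by apply: DQ_relP DQGw; lia.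
Qed.

Lemma QDGroth_stage d : (2 <= n)%N -> (d <= n - 2)%N ->
  exists2 w, at_stage (n - d) n w & G w = \prod_(d.+1 <= i < n) psi n i.
Proof.
move=> n_ge2; elim: d => [|d IH] d_le.
  by exists (wlong n); [rewrite subn0; apply: at_stage_wlong | rewrite G_QDG.1].
have [w w_stage Gw] := IH ltac:(lia).
have w_restart : at_stage (n - d.+1) (n - d.+1) w.
  rewrite (_ : n - d.+1 = (n - d).-1)%N; last by lia.
  by apply: at_stage_restart w_stage; lia.
have [w' w'_stage chain] :=
  @QDGroth_block (n - d.+1) d.+1 (n - d.+1) w ltac:(lia) ltac:(lia) w_restart.
exists w' => //.
have inv_tail : eta_invariant (n - d.+1) d.+1 (\prod_(d.+2 <= i < n) psi n i).
  by move=> q q_range; rewrite rmorph_prod; apply: eq_big_nat => i i_range; apply: s_eta_psi; lia.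
rewrite Gw (big_ltn (_ : d.+1 < n)%N) in chain; last by lia.
by apply: DQ_chain_uniq chain (DQ_chain_psi _ inv_tail); lia.
Qed.

End QuantumDoubleGrothendieck.

Unset Implicit Arguments.

Theorem corollary5p3 (n : nat) (hn : (2 <= n)%N) (G : 'S_n -> Pring n) :
  is_QDGroth n G ->
  G (cox n) =
    \sum_(0 <= j < n) (-1) ^+ j * (1 - etav n 1) ^+ j * Fpol n n.-1 j.
Proof.
move=> G_QDG.
have [w w_stage Gw] := QDGroth_stage G_QDG hn (leqnn (n - 2)).
have -> : cox n = w by apply/esym/at_stage_cox => //; move: w_stage; rewrite subKn.
rewrite Gw (_ : (n - 2).+1 = n.-1)%N; last by lia.
rewrite big_ltn; last by lia.
rewrite big_geq ?mulr1; last by lia.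
rewrite /psi prednK; last by lia.
by rewrite (_ : n - n.-1 = 1)%N //; lia.
Qed.
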